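(* Let $f,q\in\mathbb{R}[x_1,\dots,x_n]$ with $q\in\mathcal Q(1-x_1^2,\dots,1-x_n^2)_r$ and $r\ge\deg(f)$. Then \[ f+\|f-q\|_{1,\mathrm{cheb}}\in\mathcal Q(1-x_1^2,\dots,1-x_n^2)_{2r}. \]
   Context: $\Sigma[x]_r$ is the cone of sums of squares of polynomials in $x=(x_1,\dots,x_n)$ of total degree at most $r$; $\mathcal Q(1-x_1^2,\dots,1-x_n^2)_r=\Sigma[x]_r+\sum_{i=1}^n(1-x_i^2)\Sigma[x]_{r-2}$. $T_k(x)=\cos(k\arccos x)$ is the Chebyshev polynomial of the first kind; for $\alpha\in\mathbb{N}_0^n$, $T_\alpha(x)=\prod_iT_{\alpha_i}(x_i)$; for $p=\sum_\alpha p_\alpha T_\alpha$, $\|p\|_{1,\mathrm{cheb}}=\sum_\alpha|p_\alpha|$. *)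

From HB Require Import structures.
From mathcomp Require Import all_boot all_order all_algebra.
From mathcomp Require Import reals.
From mathcomp Require Import mpoly.
From Stdlib Require Import ClassicalEpsilon.
Set Implicit Arguments. Unset Strict Implicit. Unset Printing Implicit Defensive.
Import Order.TTheory GRing.Theory Num.Theory.
Local Open Scope ring_scope.

Section Defs.
Variables (R : realType) (n : nat).

(* Sigma[x]_d (d an integer, possibly negative): sums of squares of
   polynomials s with 2*deg s <= d, i.e. SOS of total degree <= d.
   For d < 0 this is {0}. *)
Definition sos_le (d : int) (p : {mpoly R[n]}) : Prop :=
  exists l : seq {mpoly R[n]},
    p = \sum_(s <- l) s ^+ 2 /\
    (forall s, s \in l -> (((msize s).-1).*2)%:Z <= d).

Definition qmodule (r : nat) (p : {mpoly R[n]}) : Prop :=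
  exists (s0 : {mpoly R[n]}) (s : 'I_n -> {mpoly R[n]}),
    sos_le r%:Z s0 /\ (forall i, sos_le (r%:Z - 2) (s i)) /\
    p = s0 + \sum_(i < n) (1 - 'X_i ^+ 2) * s i.

Fixpoint cheb_aux (i : 'I_n) (k : nat) : {mpoly R[n]} * {mpoly R[n]} :=
  (* returns (T_k(x_i), T_{k+1}(x_i)) *)
  match k with
  | 0 => (1, 'X_i)
  | k'.+1 => let: (a, b) := cheb_aux i k' in (b, 2%:R * 'X_i * b - a)
  end.
Definition chebT1 (i : 'I_n) (k : nat) : {mpoly R[n]} := (cheb_aux i k).1.

Definition chebT (a : 'X_{1..n}) : {mpoly R[n]} :=
  \prod_(i < n) chebT1 i (a i).

(* c (a finitely supported family of reals indexed by multi-indices,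
   encoded as an mpoly) gives the Chebyshev expansion of p *)
Definition is_cheb_expansion (p c : {mpoly R[n]}) : Prop :=
  p = \sum_(a <- msupp c) c@_a *: chebT a.

(* the Chebyshev coefficients p_alpha of p (the expansion is unique) *)
Definition cheb_coeffs (p : {mpoly R[n]}) : {mpoly R[n]} :=
  epsilon (inhabits 0) (is_cheb_expansion p).

Definition cheb_norm (p : {mpoly R[n]}) : R :=
  \sum_(a <- msupp (cheb_coeffs p)) `|(cheb_coeffs p)@_a|.

End Defs.

From HB Require Import structures.
From mathcomp Require Import all_boot all_order all_algebra.
From mathcomp Require Import reals.
From mathcomp Require Import mpoly.
From mathcomp Require Import ring zify.
From Stdlib Require Import ClassicalEpsilon.
Import Order.TTheory GRing.Theory Num.Theory.
Local Open Scope ring_scope.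
Set Implicit Arguments. Unset Strict Implicit. Unset Printing Implicit Defensive.

(* Expand g := f - q in the Chebyshev basis, g = sum_a g_a T_a; as deg g <= r,
   only multi-indices with |a| <= r occur.  Then
     f + ||g||_{1,cheb} = q + sum_a (|g_a| + g_a T_a),
   and each 1 +- T_a lies in Q_{2|a|}: 1 +- T = ((1 +- T)^2 + (1 - T^2)) / 2, and
   1 - T_a^2 = sum_i (1 - x_i^2) s_i with s_i SOS of degree <= 2|a| - 2, because
   1 - T_k(x)^2 = (1 - x^2) U_(k-1)(x)^2 in one variable and
   1 - (u w)^2 = (1 - u^2) + u^2 (1 - w^2) handles the product over variables. *)

Section SumsOfSquares.
Variables (R : realType) (n : nat).
Implicit Types (p q s u v w : {mpoly R[n]}) (d : int).

Lemma msizeM_leq p q : (msize (p * q) <= (msize p + msize q).-1)%N.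
Proof.
have [->|np] := eqVneq p 0; first by rewrite mul0r msize0.
have [->|nq] := eqVneq q 0; first by rewrite mulr0 msize0.
by rewrite msizeM.
Qed.

Lemma sos_le0 d : sos_le d (0 : {mpoly R[n]}).
Proof. by exists [::]; rewrite big_nil. Qed.

Lemma sos_leD d p q : sos_le d p -> sos_le d q -> sos_le d (p + q).
Proof.
move=> [l1 [-> H1]] [l2 [-> H2]]; exists (l1 ++ l2); rewrite big_cat.
by split=> // s; rewrite mem_cat => /orP[/H1|/H2].
Qed.

Lemma sos_le_widen d d' p : d <= d' -> sos_le d p -> sos_le d' p.
Proof. by move=> le [l [-> H]]; exists l; split=> // s /H /le_trans; apply. Qed.

Lemma sos_le_sqr d k s : (msize s <= k.+1)%N -> (2 * k)%:Z <= d -> sos_le d (s ^+ 2).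
Proof.
move=> hs kd; exists [:: s]; rewrite big_seq1; split=> // t.
by rewrite inE => /eqP ->; lia.
Qed.

Lemma sos_leZ d c p : 0 <= c -> sos_le d p -> sos_le d (c *: p).
Proof.
move=> c0 [l [-> H]]; exists [seq Num.sqrt c *: s | s <- l]; split.
  rewrite big_map scaler_sumr; apply: eq_bigr => s _.
  by rewrite exprZn sqr_sqrtr.
move=> _ /mapP [s /H hs ->]; apply: le_trans hs; rewrite lez_nat leq_double.
by rewrite -!subn1 leq_sub2r ?msizeZ_le.
Qed.

Lemma sos_le_mulsqr d k u p : (msize u <= k.+1)%N -> sos_le d p ->
  sos_le (d + (2 * k)%:Z) (u ^+ 2 * p).
Proof.
move=> hu [l [-> H]]; exists [seq u * s | s <- l]; split.
  by rewrite big_map mulr_sumr; apply: eq_bigr => s _; rewrite exprMn.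
move=> _ /mapP [s /H hs ->]; have := msizeM_leq u s; lia.
Qed.

Lemma sos_le_eq0 d p : d < 0 -> sos_le d p -> p = 0.
Proof.
move=> d_lt0 [[|s l] [-> H]]; first by rewrite big_nil.
by have := H s (mem_head _ _); lia.
Qed.

Lemma sos_le_msize d (k : nat) p : d <= k%:Z -> sos_le d p -> (msize p <= k.+1)%N.
Proof.
move=> dk [l [-> H]]; elim: l H => [|s l IH] H; first by rewrite big_nil msize0.
rewrite big_cons; apply: leq_trans (msizeD_le _ _) _; rewrite geq_max.
rewrite IH => [|t tl]; last by apply: H; rewrite inE tl orbT.
have := H s (mem_head _ _); have := msizeM_leq s s; rewrite expr2; lia.
Qed.

Definition weighted_sos (d : nat) p : Prop :=
  exists s : 'I_n -> {mpoly R[n]},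
    (forall i, sos_le (d%:Z - 2) (s i)) /\ p = \sum_(i < n) (1 - 'X_i ^+ 2) * s i.

Lemma weighted_sos0 k : weighted_sos k 0.
Proof.
exists (fun=> 0); split=> [i|]; first exact: sos_le0.
by rewrite big1 // => i _; rewrite mulr0.
Qed.

Lemma qmodule0 r : qmodule r (0 : {mpoly R[n]}).
Proof.
exists 0, (fun=> 0); split; first exact: sos_le0.
split=> [i|]; first exact: sos_le0.
by rewrite add0r big1 // => i _; rewrite mulr0.
Qed.

Lemma sos_qmodule r p : sos_le r%:Z p -> qmodule r p.
Proof.
move=> hp; exists p, (fun=> 0); split=> //; split=> [i|]; first exact: sos_le0.
by rewrite big1 ?addr0 // => i _; rewrite mulr0.
Qed.

Lemma weighted_sos_qmodule r p : weighted_sos r p -> qmodule r p.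
Proof. by move=> [s [hs ->]]; exists 0, s; rewrite add0r; split=> //; apply: sos_le0. Qed.

Lemma qmoduleD r p q : qmodule r p -> qmodule r q -> qmodule r (p + q).
Proof.
move=> [s0 [s [h0 [hs ->]]]] [t0 [t [k0 [kt ->]]]].
exists (s0 + t0), (fun i => s i + t i); split; first exact: sos_leD.
split=> [i|]; first exact: sos_leD.
rewrite addrACA -big_split /=; congr (_ + _).
by apply: eq_bigr => i _; rewrite mulrDr.
Qed.

Lemma qmodule_sum r (I : Type) (l : seq I) (P : pred I) (F : I -> {mpoly R[n]}) :
  (forall i, P i -> qmodule r (F i)) -> qmodule r (\sum_(i <- l | P i) F i).
Proof.
by move=> hF; elim/big_rec: _ => [|i p /hF]; [apply: qmodule0 | apply: qmoduleD].
Qed.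

Lemma qmoduleZ r c p : 0 <= c -> qmodule r p -> qmodule r (c *: p).
Proof.
move=> c0 [s0 [s [h0 [hs ->]]]].
exists (c *: s0), (fun i => c *: s i); split; first exact: sos_leZ.
split=> [i|]; first exact: sos_leZ.
by rewrite scalerDr scaler_sumr; congr (_ + _); apply: eq_bigr => i _; rewrite scalerAr.
Qed.

Lemma qmodule_widen r r' p : (r <= r')%N -> qmodule r p -> qmodule r' p.
Proof.
move=> le [s0 [s [h0 [hs ->]]]]; exists s0, s; split.
  by apply: sos_le_widen h0; rewrite lez_nat.
by split=> // i; apply: sos_le_widen (hs i); rewrite lerD2r lez_nat.
Qed.

Lemma msize_1subX2 (i : 'I_n) : (msize (1 - 'X_i ^+ 2 : {mpoly R[n]}) <= 3)%N.
Proof.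
apply: leq_trans (msizeD_le _ _) _.
by rewrite msizeN mpolyXn msizeX msize1 mdegMn mdeg1.
Qed.

Lemma qmodule_msize r p : qmodule r p -> (msize p <= r.+1)%N.
Proof.
move=> [s0 [s [h0 [hs ->]]]]; apply: leq_trans (msizeD_le _ _) _.
rewrite geq_max (sos_le_msize _ h0) //; apply: leq_trans (mmeasure_sum _ _ _ _) _.
apply/bigmax_leqP => i _; have [r_lt2|r_ge2] := ltnP r 2.
  by rewrite (sos_le_eq0 _ (hs i)) ?mulr0 ?msize0 //; lia.
have hsi : (msize (s i) <= (r - 2).+1)%N by apply: sos_le_msize (hs i); rewrite -subzn.
apply: leq_trans (msizeM_leq _ _) _; have := msize_1subX2 i; lia.
Qed.

Lemma weighted_sos_1subM k m u w : (msize u <= k.+1)%N ->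
  weighted_sos (2 * k) (1 - u ^+ 2) -> weighted_sos (2 * m) (1 - w ^+ 2) ->
  weighted_sos (2 * (k + m)) (1 - (u * w) ^+ 2).
Proof.
move=> hu [s [hs es]] [t [ht et]].
exists (fun i => s i + u ^+ 2 * t i); split=> [i|].
  apply: sos_leD; first by apply: sos_le_widen (hs i); lia.
  by apply: sos_le_widen (sos_le_mulsqr hu (ht i)); lia.
have -> : 1 - (u * w) ^+ 2 = (1 - u ^+ 2) + u ^+ 2 * (1 - w ^+ 2) by ring.
rewrite es et mulr_sumr -big_split /=; apply: eq_bigr => i _; ring.
Qed.

Lemma qmodule_1addr D v : (msize v <= D.+1)%N ->
  qmodule (2 * D) (1 - v ^+ 2) -> qmodule (2 * D) (1 + v).
Proof.
move=> hv h1v.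
have e : (1 + v) ^+ 2 + (1 - v ^+ 2) = 2%:R *: (1 + v) by rewrite scaler_nat; ring.
have -> : 1 + v = 2^-1 *: ((1 + v) ^+ 2 + (1 - v ^+ 2)).
  by rewrite e scalerA mulVf ?pnatr_eq0 // scale1r.
apply: qmoduleZ; first by rewrite invr_ge0 ler0n.
apply: qmoduleD h1v; apply/sos_qmodule/(@sos_le_sqr _ D) => //.
by apply: leq_trans (msizeD_le _ _) _; rewrite msize1 geq_max hv.
Qed.

End SumsOfSquares.

Lemma pell_step (A : comPzRingType) (x t t' v : A) :
  t' = x * t - (1 - x ^+ 2) * v -> 1 - t ^+ 2 = (1 - x ^+ 2) * v ^+ 2 ->
  1 - t' ^+ 2 = (1 - x ^+ 2) * (x * v + t) ^+ 2.
Proof.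
move=> -> pell; have t2 : t ^+ 2 = 1 - (1 - x ^+ 2) * v ^+ 2 by rewrite -pell; ring.
ring: t2.
Qed.

Section Chebyshev.
Variables (R : realType) (n : nat).
Implicit Types (i : 'I_n) (k : nat).

Lemma chebT1_0 i : chebT1 R i 0 = 1. Proof. by []. Qed.

Lemma chebT1_1 i : chebT1 R i 1 = 'X_i. Proof. by []. Qed.

Lemma chebT1_SS i k :
  chebT1 R i k.+2 = 2%:R * 'X_i * chebT1 R i k.+1 - chebT1 R i k.
Proof. by rewrite /chebT1 /=; case: (cheb_aux R i k). Qed.

(* [chebU1 i k] is U_(k-1)(x_i), with U the Chebyshev polynomials of the
   second kind; in particular chebU1 i 0 = 0. *)
Fixpoint chebU1 i k : {mpoly R[n]} :=
  if k is k'.+1 then 'X_i * chebU1 i k' + chebT1 R i k' else 0.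

Lemma chebT1_S i k :
  chebT1 R i k.+1 = 'X_i * chebT1 R i k - (1 - 'X_i ^+ 2) * chebU1 i k.
Proof.
elim: k => [|k IH]; first by rewrite chebT1_1 chebT1_0 mulr0 subr0 mulr1.
by rewrite chebT1_SS /= IH; ring.
Qed.

Lemma one_sub_chebT1_sqr i k :
  1 - chebT1 R i k ^+ 2 = (1 - 'X_i ^+ 2) * chebU1 i k ^+ 2.
Proof.
elim: k => [|k IH]; first by rewrite chebT1_0 expr1n subrr expr0n mulr0.
exact/pell_step/IH/chebT1_S.
Qed.

Lemma mpolyX_neq0 i : ('X_i : {mpoly R[n]}) != 0.
Proof. by rewrite -msize_poly_eq0 msizeX mdeg1. Qed.

Lemma chebT1_mlead_neq0 i k :
  chebT1 R i k != 0 /\ mlead (chebT1 R i k) = (U_(i) *+ k)%MM.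
Proof.
suff: forall k, (chebT1 R i k != 0 /\ mlead (chebT1 R i k) = (U_(i) *+ k)%MM) /\
                (chebT1 R i k.+1 != 0 /\ mlead (chebT1 R i k.+1) = (U_(i) *+ k.+1)%MM).
  by move=> /(_ k) [].
elim=> [|{}k [[nz0 l0] [nz1 l1]]].
  rewrite chebT1_0 chebT1_1 oner_neq0 mpolyX_neq0 mlead1 mleadXm.
  by split; split=> //; apply/mnmP => j; rewrite mulmnE ?muln0 ?muln1.
split=> //; rewrite chebT1_SS.
have lead2XT : mlead (2%:R * 'X_i * chebT1 R i k.+1) = (U_(i) *+ k.+2)%MM.
  rewrite -mulrA -mpolyC_nat mul_mpolyC mleadZ ?pnatr_eq0 //.
  rewrite mleadM ?mpolyX_neq0 // mleadXm l1.
  by apply/mnmP => j; rewrite mnmDE !mulmnE mulnS.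
have lt : (mlead (- chebT1 R i k) < mlead (2%:R * 'X_i * chebT1 R i k.+1))%O.
  by rewrite mleadN l0 lead2XT; apply: lt_mdeg_ltmc; rewrite !mdegMn mdeg1; lia.
rewrite (mleadDl lt) lead2XT; split=> //; apply/negP => /eqP T_eq0.
have := mleadDl lt; rewrite T_eq0 mlead0 lead2XT => /(congr1 mdeg).
by rewrite mdeg0 mdegMn mdeg1.
Qed.

Lemma chebT1_neq0 i k : chebT1 R i k != 0.
Proof. by case: (chebT1_mlead_neq0 i k). Qed.

Lemma chebT1_mlead i k : mlead (chebT1 R i k) = (U_(i) *+ k)%MM.
Proof. by case: (chebT1_mlead_neq0 i k). Qed.

Lemma msize_chebT1 i k : msize (chebT1 R i k) = k.+1.
Proof. by rewrite -mlead_deg ?chebT1_neq0 // chebT1_mlead mdegMn mdeg1 mul1n. Qed.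

Lemma msize_chebU1 i k : (msize (chebU1 i k) <= k)%N.
Proof.
elim: k => [|k IH] /=; first by rewrite msize0.
apply: leq_trans (msizeD_le _ _) _; rewrite geq_max msize_chebT1 leqnn andbT.
apply: leq_trans (msizeM_leq _ _) _; rewrite msizeX mdeg1; lia.
Qed.

Lemma chebT_neq0 (a : 'X_{1..n}) : chebT R a != 0.
Proof. by apply/prodf_neq0 => i _; apply: chebT1_neq0. Qed.

Lemma chebT_mlead (a : 'X_{1..n}) : mlead (chebT R a) = a.
Proof.
rewrite mlead_prod => [|i _ _]; last exact: chebT1_neq0.
by rewrite [RHS]multinomUE_id; apply: eq_bigr => i _; apply: chebT1_mlead.
Qed.

Lemma msize_chebT (a : 'X_{1..n}) : msize (chebT R a) = (mdeg a).+1.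
Proof. by rewrite -mlead_deg ?chebT_neq0 // chebT_mlead. Qed.

Lemma weighted_sos_1sub_chebT1 i k : weighted_sos (2 * k) (1 - chebT1 R i k ^+ 2).
Proof.
exists (fun j => if j == i then chebU1 i k ^+ 2 else 0); split=> [j|].
  case: eqP => _; last exact: sos_le0.
  case: k => [|k]; first by rewrite expr0n; apply: sos_le0.
  by apply: sos_le_sqr (msize_chebU1 i k.+1) _; lia.
rewrite one_sub_chebT1_sqr (bigD1 i) //= eqxx big1 ?addr0 // => j /negPf ->.
by rewrite mulr0.
Qed.

Lemma weighted_sos_1sub_chebT (a : 'X_{1..n}) :
  weighted_sos (2 * mdeg a) (1 - chebT R a ^+ 2).
Proof.
rewrite mdegE /chebT; elim/big_rec2: _ => [|i w k _ hw].
  by rewrite expr1n subrr; apply: weighted_sos0.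
by apply: weighted_sos_1subM hw; rewrite ?msize_chebT1 //; apply: weighted_sos_1sub_chebT1.
Qed.

Lemma qmodule_abs_add_chebT (D : nat) (c : R) (a : 'X_{1..n}) : (mdeg a <= D)%N ->
  qmodule (2 * D) (`|c|%:MP + c *: chebT R a).
Proof.
move=> aD; have qmodule_1add_pmT (v : {mpoly R[n]}) : v ^+ 2 = chebT R a ^+ 2 ->
    (msize v <= D.+1)%N -> qmodule (2 * D) (1 + v).
  move=> v2 hv; apply: qmodule_1addr hv _; rewrite v2.
  apply: qmodule_widen (weighted_sos_qmodule (weighted_sos_1sub_chebT a)); lia.
have hT : (msize (chebT R a) <= D.+1)%N by rewrite msize_chebT.
rewrite -alg_mpolyC; have [c0|c0] := leP 0 c.
  by rewrite ger0_norm // -scalerDr; apply: qmoduleZ (qmodule_1add_pmT _ _ hT).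
rewrite ltr0_norm // -[c *: _]opprK -scaleNr -scalerN -scalerDr.
by apply: qmoduleZ (qmodule_1add_pmT _ _ _); rewrite ?oppr_ge0 ?ltW ?sqrrN ?msizeN.
Qed.

End Chebyshev.

Section ChebyshevExpansion.
Variables (R : realType) (n : nat).
Implicit Types (p c : {mpoly R[n]}) (a : 'X_{1..n}).

Definition cheb_comb c : {mpoly R[n]} := \sum_(a <- msupp c) c@_a *: chebT R a.

Lemma cheb_comb_seq c (s : seq 'X_{1..n}) : uniq s -> {subset msupp c <= s} ->
  cheb_comb c = \sum_(a <- s) c@_a *: chebT R a.
Proof.
move=> s_uniq c_s; rewrite [RHS](bigID (mem (msupp c))) /=.
rewrite [X in _ + X]big1 ?addr0 => [|a /memN_msupp_eq0 ->]; last exact: scale0r.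
rewrite -big_filter; apply/perm_big/uniq_perm; rewrite ?filter_uniq ?msupp_uniq //.
by move=> a; rewrite mem_filter; case: (boolP (a \in msupp c)) => // /c_s ->.
Qed.

Lemma cheb_comb0 : cheb_comb 0 = 0.
Proof. by rewrite /cheb_comb msupp0 big_nil. Qed.

Lemma cheb_combD c1 c2 : cheb_comb (c1 + c2) = cheb_comb c1 + cheb_comb c2.
Proof.
pose s := undup (msupp c1 ++ msupp c2).
have s_uniq : uniq s by apply: undup_uniq.
rewrite !(@cheb_comb_seq _ s) // => [|a|a|a]; rewrite ?mem_undup ?mem_cat.
- by rewrite -big_split; apply: eq_bigr => a _; rewrite mcoeffD scalerDl.
- by move=> ->; rewrite orbT.
- by move=> ->.
- by move/msuppD_le; rewrite mem_cat.
Qed.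

Lemma cheb_combZX (l : R) a : cheb_comb (l *: 'X_[a]) = l *: chebT R a.
Proof.
have [->|l_neq0] := eqVneq l 0; first by rewrite !scale0r cheb_comb0.
by rewrite /cheb_comb msuppMCX // big_seq1 mcoeffZ mcoeffX eqxx mulr1.
Qed.

(* Triangularity: chebT a has leading monomial a, so subtracting a multiple of
   chebT (mlead p) lowers the leading monomial of p. *)
Lemma cheb_comb_surj p : exists c, p = cheb_comb c.
Proof.
elim/mleadrect: p => p IH; have [->|p_neq0] := eqVneq p 0.
  by exists 0; rewrite cheb_comb0.
pose a := mlead p; pose l := p@_a / (chebT R a)@_a.
have Ta_neq0 : (chebT R a)@_a != 0.
  by rewrite -[X in _@_X](chebT_mlead R a) mleadc_eq0 chebT_neq0.
pose q := p - l *: chebT R a.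
suff [c qE] : exists c, q = cheb_comb c.
  by exists (c + l *: 'X_[a]); rewrite cheb_combD cheb_combZX -qE subrK.
have [->|q_neq0] := eqVneq q 0; first by exists 0; rewrite cheb_comb0.
apply: IH; rewrite lt_neqAle; apply/andP; split.
  apply: contra_neq q_neq0 => lead_q; apply/eqP; rewrite -mleadc_eq0 lead_q.
  by rewrite mcoeffB mcoeffZ divfK // subrr.
apply: le_trans (mleadB_le _ _) _.
by rewrite leUx lexx /= (le_trans (mleadZ_le _ _)) // chebT_mlead.
Qed.

Lemma cheb_coeffsE p : p = cheb_comb (cheb_coeffs p).
Proof. exact: epsilon_spec (cheb_comb_surj p). Qed.

Lemma mcoeff_cheb_comb_mlead c :
  (cheb_comb c)@_(mlead c) = c@_(mlead c) * (chebT R (mlead c))@_(mlead c).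
Proof.
have [->|c_neq0] := eqVneq c 0; first by rewrite cheb_comb0 !mcoeff0 mul0r.
rewrite /cheb_comb raddf_sum /= (bigD1_seq (mlead c)) ?mlead_supp ?msupp_uniq //=.
rewrite mcoeffZ big_seq_cond big1 ?addr0 // => b /andP[b_c b_neq].
rewrite mcoeffZ [(chebT R b)@_ _]mcoeff_gt_mlead ?mulr0 // chebT_mlead lt_neqAle b_neq.
exact: msupp_le_mlead.
Qed.

Lemma mdeg_lt_msize_cheb_comb c a : a \in msupp c -> (mdeg a < msize (cheb_comb c))%N.
Proof.
move=> a_c; have c_neq0 : c != 0 by apply: contraTneq a_c => ->; rewrite msupp0.
apply: leq_ltn_trans (lemc_mdeg (msupp_le_mlead a_c)) (msize_mdeg_lt _).
rewrite mcoeff_msupp mcoeff_cheb_comb_mlead mulf_neq0 ?mleadc_eq0 //.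
by rewrite -[X in _@_X](chebT_mlead R (mlead c)) mleadc_eq0 chebT_neq0.
Qed.

Lemma cheb_norm_addE p : (cheb_norm p)%:MP + p =
  \sum_(a <- msupp (cheb_coeffs p))
     (`|(cheb_coeffs p)@_a|%:MP + (cheb_coeffs p)@_a *: chebT R a).
Proof. by rewrite big_split /= -raddf_sum {2}[p]cheb_coeffsE. Qed.

Lemma qmodule_cheb_norm_add r p : (msize p <= r.+1)%N ->
  qmodule (2 * r) ((cheb_norm p)%:MP + p).
Proof.
move=> hp; rewrite cheb_norm_addE big_seq; apply: qmodule_sum => a a_c.
apply: qmodule_abs_add_chebT; have := mdeg_lt_msize_cheb_comb a_c.
by rewrite -cheb_coeffsE; lia.
Qed.

End ChebyshevExpansion.

Theorem theorem4 (R : realType) (n : nat) (f q : {mpoly R[n]}) (r : nat) :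
  qmodule r q -> (msize f <= r.+1)%N ->
  qmodule (2 * r) (f + (cheb_norm (f - q))%:MP).
Proof.
move=> hq hf; have -> : f + (cheb_norm (f - q))%:MP =
    q + ((cheb_norm (f - q))%:MP + (f - q)) by ring.
apply: qmoduleD; first by apply: qmodule_widen hq; lia.
apply: qmodule_cheb_norm_add; apply: leq_trans (msizeD_le _ _) _.
by rewrite msizeN geq_max hf qmodule_msize.
Qed.
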